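(* The sequence $(\beta^c_k)_{k\in\mathbb{N}}$ is strictly decreasing and $\lim_{k\to+\infty}\beta^c_k=1$.
   Context: $\mathbb{N}=\{0,1,2,\dots\}$. For $t\ge 0$ let $q(t)=\lfloor t+1\rfloor/2$ if $\lfloor t\rfloor$ is odd and $q(t)=t-\lfloor t\rfloor/2$ if $\lfloor t\rfloor$ is even, and $p(t)=t+1-q(t)$. For $\beta\ge1$ let $\hat\sigma(t,\beta)\in(0,1)$ be the unique solution $\sigma$ of $\frac{p(t)\sigma}{\sqrt{1-\sigma^2}}+\frac{q(t)\sigma}{\sqrt{\beta^2-\sigma^2}}=1$, and $l(t,\beta)=\frac{p(t)}{\sqrt{1-\hat\sigma^2}}+\frac{\beta^2q(t)}{\sqrt{\beta^2-\hat\sigma^2}}-t-\sqrt2$. For $k\in\mathbb{N}$, $\delta(k,\beta)=l(2k+2,\beta)-l(2k,\beta)$. For each $k\in\mathbb{N}$, $\beta^c_k$ denotes the unique number in $(1,\sqrt2)$ with $\delta(k,\beta^c_k)=0$ (well defined since $\beta\mapsto\delta(k,\beta)$ is strictly increasing on $[1,\infty)$ with $\delta(k,1)<0<\delta(k,\sqrt2)$). *)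

From Stdlib Require Import Reals Lra ZArith ClassicalEpsilon.
Open Scope R_scope.

(* floor t = Int_part t (Stdlib: Int_part r = up r - 1, the floor of r) *)
Definition qfun (t : R) : R :=
  if Z.odd (Int_part t) then IZR (Int_part (t + 1)) / 2
  else t - IZR (Int_part t) / 2.

Definition pfun (t : R) : R := t + 1 - qfun t.

Definition sigma_eq (t beta s : R) : Prop :=
  pfun t * s / sqrt (1 - s ^ 2) + qfun t * s / sqrt (beta ^ 2 - s ^ 2) = 1.

(* sigma-hat(t,beta): the (unique) solution in (0,1), chosen by epsilon *)
Definition sigma_hat (t beta : R) : R :=
  epsilon (inhabits 0) (fun s => 0 < s < 1 /\ sigma_eq t beta s).

Definition lfun (t beta : R) : R :=
  let s := sigma_hat t beta in
  pfun t / sqrt (1 - s ^ 2) + beta ^ 2 * qfun t / sqrt (beta ^ 2 - s ^ 2)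
  - t - sqrt 2.

Definition delta (k : nat) (beta : R) : R :=
  lfun (2 * INR k + 2) beta - lfun (2 * INR k) beta.

(* beta^c_k: the (unique) number in (1, sqrt 2) with delta k beta = 0 *)
Definition beta_c (k : nat) : R :=
  epsilon (inhabits 0) (fun b => 1 < b < sqrt 2 /\ delta k b = 0).

From Stdlib Require Import Reals Ranalysis5 ZArith Lra Lia ClassicalEpsilon.
Open Scope R_scope.

(* For t = 2k the critical-point equation defining sigma-hat says that sigma-hat
   maximises  F_k(x) = (k+1) sqrt(1 - x^2) + k sqrt(beta^2 - x^2) + x  on [0,1], and
   l(2k, beta) + 2k + sqrt 2 = M_k(beta) := max F_k.  Hence
   delta(k, beta) = M_(k+1)(beta) - M_k(beta) - 2.  Since F_k is affine in k,
   k |-> M_k is strictly convex, so delta(., beta) is strictly increasing; comparing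
   maximisers at two values of beta shows k (beta' - beta) <= M_k(beta') - M_k(beta)
   <= (k+1) (beta' - beta), so delta(k, .) is nondecreasing and 2-Lipschitz (the
   latter yields beta^c_k by the intermediate value theorem).  The two monotonicities
   give beta^c_(k+1) < beta^c_k.  Finally (k+1) sigma-hat <= 1 gives
   delta(k, beta) >= beta - 1 - 2/(k+1)^2, whence beta^c_k <= 1 + 2/(k+1)^2. *)

Lemma sqrt_lower c x : 0 <= c -> c ^ 2 <= x -> c <= sqrt x.
Proof. intros Hc H. rewrite <- (sqrt_pow2 c Hc). apply sqrt_le_1_alt; lra. Qed.

Lemma sqrt_lower_strict c x : 0 <= c -> c ^ 2 < x -> c < sqrt x.
Proof.
  intros Hc H. rewrite <- (sqrt_pow2 c Hc).
  apply sqrt_lt_1_alt; split; [apply pow2_ge_0 | lra].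
Qed.

Lemma sqrt_upper c x : 0 <= c -> x <= c ^ 2 -> sqrt x <= c.
Proof. intros Hc H. rewrite <- (sqrt_pow2 c Hc). apply sqrt_le_1_alt; lra. Qed.

Lemma sqrt_le_tangent a x : 0 < a -> 0 <= x -> sqrt x <= sqrt a + (x - a) / (2 * sqrt a).
Proof.
  intros Ha Hx.
  pose proof (sqrt_lt_R0 a Ha). pose proof (sqrt_sqrt a (Rlt_le _ _ Ha)).
  pose proof (sqrt_sqrt x Hx). pose proof (sqrt_pos x).
  apply (Rmult_le_reg_r (2 * sqrt a)); [lra |].
  unfold Rdiv. rewrite Rmult_plus_distr_r, Rmult_assoc, Rinv_l by lra.
  pose proof (pow2_ge_0 (sqrt x - sqrt a)). nra.
Qed.

Lemma sqrt_sq_sub_sq_ge b s : 1 <= b -> 0 <= s ^ 2 <= 1 -> b - s ^ 2 <= sqrt (b ^ 2 - s ^ 2).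
Proof.
  intros Hb Hs. apply sqrt_lower; [lra |].
  assert (s ^ 2 * s ^ 2 <= s ^ 2 * (2 * b - 1)) by (apply Rmult_le_compat_l; nra).
  nra.
Qed.

Definition obj (p q b x : R) : R := p * sqrt (1 - x ^ 2) + q * sqrt (b ^ 2 - x ^ 2) + x.

(* The vanishing of the derivative of [obj p q b] at [s]; for [p = pfun t] and
   [q = qfun t] this is [sigma_eq t b s]. *)
Definition crit (p q b s : R) : Prop :=
  p * s / sqrt (1 - s ^ 2) + q * s / sqrt (b ^ 2 - s ^ 2) = 1.

Section CriticalPoint.

Variables p q b : R.
Hypotheses (Hp : 0 <= p) (Hq : 0 <= q) (Hb : 1 <= b).

Lemma crit_exists : 1 <= p -> exists s, 0 < s < 1 /\ crit p q b s.
Proof.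
  intros Hp1.
  set (g x := p * x / sqrt (1 - x ^ 2) + q * x / sqrt (b ^ 2 - x ^ 2) - 1).
  assert (Hcont : forall a, 0 <= a <= 4 / 5 -> continuity_pt g a).
  { intros a Ha. unfold g. reg;
      try (apply Rgt_not_eq, sqrt_lt_R0); unfold fct_cte, pow_fct in *; nra. }
  assert (Hg0 : g 0 < 0).
  { unfold g. replace (p * 0) with 0 by ring. replace (q * 0) with 0 by ring.
    unfold Rdiv. lra. }
  assert (Hg1 : 0 < g (4 / 5)).
  { unfold g. replace (sqrt (1 - (4 / 5) ^ 2)) with (3 / 5)
      by (symmetry; apply sqrt_lem_1; lra).
    assert (0 <= q * (4 / 5) / sqrt (b ^ 2 - (4 / 5) ^ 2)).
    { apply Rmult_le_pos; [nra | apply Rlt_le, Rinv_0_lt_compat, sqrt_lt_R0; nra]. }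
    assert (p * (4 / 5) / (3 / 5) = 4 / 3 * p) by field.
    lra. }
  destruct (IVT_interv g 0 (4 / 5) Hcont ltac:(lra) Hg0 Hg1) as [s [Hs Es]].
  assert (s <> 0) by (intros ->; lra).
  exists s. unfold g, crit in *. split; lra.
Qed.

Section AtCriticalPoint.

Variable s : R.
Hypotheses (Hs : 0 < s < 1) (Hcrit : crit p q b s).

Let one_sub_pos : 0 < 1 - s ^ 2. Proof. nra. Qed.
Let b_sub_pos : 0 < b ^ 2 - s ^ 2. Proof. nra. Qed.

(* [obj p q b] is concave and its derivative vanishes at [s]; bounding each square
   root by its tangent at [s] yields a quadratic loss away from [s]. *)
Lemma obj_le_crit x :
  0 <= x <= 1 -> obj p q b x <= obj p q b s - (x - s) ^ 2 / (2 * s).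
Proof.
  intros Hx. unfold obj, crit in *.
  pose proof (sqrt_le_tangent _ (1 - x ^ 2) one_sub_pos ltac:(nra)) as T1.
  pose proof (sqrt_le_tangent _ (b ^ 2 - x ^ 2) b_sub_pos ltac:(nra)) as T2.
  set (u := sqrt (1 - s ^ 2)) in *. set (v := sqrt (b ^ 2 - s ^ 2)) in *.
  assert (Hu : 0 < u) by (apply sqrt_lt_R0; lra).
  assert (Hv : 0 < v) by (apply sqrt_lt_R0; lra).
  assert (Hslope : p / u + q / v = 1 / s).
  { replace (p / u + q / v) with ((p * s / u + q * s / v) / s) by (field; lra).
    rewrite Hcrit. reflexivity. }
  assert (E : p * ((1 - x ^ 2 - (1 - s ^ 2)) / (2 * u))
              + q * ((b ^ 2 - x ^ 2 - (b ^ 2 - s ^ 2)) / (2 * v))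
              = (s ^ 2 - x ^ 2) / 2 * (p / u + q / v)) by (field; lra).
  rewrite Hslope in E.
  assert ((s ^ 2 - x ^ 2) / 2 * (1 / s) + x - s = - ((x - s) ^ 2 / (2 * s)))
    by (field; lra).
  nra.
Qed.

Lemma obj_le_crit_weak x : 0 <= x <= 1 -> obj p q b x <= obj p q b s.
Proof.
  intros Hx. pose proof (obj_le_crit x Hx).
  assert (0 <= (x - s) ^ 2 / (2 * s)).
  { apply Rmult_le_pos; [apply pow2_ge_0 | apply Rlt_le, Rinv_0_lt_compat; lra]. }
  lra.
Qed.

Lemma crit_value : p / sqrt (1 - s ^ 2) + b ^ 2 * q / sqrt (b ^ 2 - s ^ 2) = obj p q b s.
Proof.
  unfold obj, crit in *.
  pose proof (sqrt_sqrt _ (Rlt_le _ _ one_sub_pos)) as Eu.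
  pose proof (sqrt_sqrt _ (Rlt_le _ _ b_sub_pos)) as Ev.
  set (u := sqrt (1 - s ^ 2)) in *. set (v := sqrt (b ^ 2 - s ^ 2)) in *.
  assert (0 < u) by (apply sqrt_lt_R0; lra).
  assert (0 < v) by (apply sqrt_lt_R0; lra).
  transitivity (p * (u * u) / u + q * (v * v) / v + s * (p * s / u + q * s / v)).
  - rewrite Eu, Ev. field; lra.
  - rewrite Hcrit. field; lra.
Qed.

Lemma crit_bound : p * s <= 1.
Proof.
  unfold crit in Hcrit.
  pose proof (sqrt_lt_R0 _ one_sub_pos). pose proof (sqrt_lt_R0 _ b_sub_pos).
  assert (sqrt (1 - s ^ 2) <= 1) by (apply sqrt_upper; nra).
  assert (0 <= q * s / sqrt (b ^ 2 - s ^ 2)).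
  { apply Rmult_le_pos; [nra | apply Rlt_le, Rinv_0_lt_compat; lra]. }
  assert (p * s <= p * s / sqrt (1 - s ^ 2)).
  { unfold Rdiv. rewrite <- (Rmult_1_r (p * s)) at 1.
    apply Rmult_le_compat_l; [nra |].
    rewrite <- Rinv_1 at 1. apply Rinv_le_contravar; lra. }
  lra.
Qed.

End AtCriticalPoint.

End CriticalPoint.

Lemma sqrt_sq_sub_incr_lower s b b' : 0 <= s ^ 2 <= 1 -> 1 <= b <= b' ->
  b' - b <= sqrt (b' ^ 2 - s ^ 2) - sqrt (b ^ 2 - s ^ 2).
Proof.
  intros Hs Hb.
  pose proof (pow2_sqrt (b' ^ 2 - s ^ 2) ltac:(nra)) as Eu.
  pose proof (pow2_sqrt (b ^ 2 - s ^ 2) ltac:(nra)) as Ev.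
  set (u := sqrt (b' ^ 2 - s ^ 2)) in *. set (v := sqrt (b ^ 2 - s ^ 2)) in *.
  assert (0 <= u) by apply sqrt_pos. assert (0 <= v) by apply sqrt_pos.
  assert (Hcross : v * b' <= u * b).
  { assert ((v * b') ^ 2 <= (u * b) ^ 2).
    { replace ((v * b') ^ 2) with (v ^ 2 * b' ^ 2) by ring.
      replace ((u * b) ^ 2) with (u ^ 2 * b ^ 2) by ring.
      rewrite Eu, Ev. assert (0 <= s ^ 2 * (b' ^ 2 - b ^ 2)) by (apply Rmult_le_pos; nra).
      nra. }
    assert (0 <= v * b') by (apply Rmult_le_pos; lra).
    assert (0 <= u * b) by (apply Rmult_le_pos; lra).
    nra. }
  assert ((v + b') ^ 2 <= (u + b) ^ 2).
  { replace ((v + b') ^ 2) with (v ^ 2 + b' ^ 2 + 2 * (v * b')) by ring.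
    replace ((u + b) ^ 2) with (u ^ 2 + b ^ 2 + 2 * (u * b)) by ring.
    rewrite Eu, Ev. lra. }
  nra.
Qed.

Lemma sqrt_sq_sub_incr_upper j s b b' : 0 <= j -> 0 <= s < 1 -> (j + 1) * s <= 1 ->
  1 <= b <= b' -> j * (sqrt (b' ^ 2 - s ^ 2) - sqrt (b ^ 2 - s ^ 2)) <= (j + 1) * (b' - b).
Proof.
  intros Hj Hs Hjs Hb.
  assert (Hs2 : 0 <= s ^ 2 <= 1) by nra.
  pose proof (sqrt_sq_sub_incr_lower s b b' Hs2 Hb).
  pose proof (pow2_sqrt (b' ^ 2 - s ^ 2) ltac:(nra)) as Eu.
  pose proof (pow2_sqrt (b ^ 2 - s ^ 2) ltac:(nra)) as Ev.
  pose proof (sqrt_sq_sub_sq_ge b' s ltac:(lra) Hs2) as Hu.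
  pose proof (sqrt_sq_sub_sq_ge b s ltac:(lra) Hs2) as Hv.
  set (u := sqrt (b' ^ 2 - s ^ 2)) in *. set (v := sqrt (b ^ 2 - s ^ 2)) in *.
  assert (HS : 0 < b + b' - 2 * s ^ 2) by nra.
  (* u - v = (b'^2 - b^2) / (u + v), and u + v >= b + b' - 2 s^2 *)
  assert (H1 : (u - v) * (b + b' - 2 * s ^ 2) <= (b' - b) * (b + b')).
  { assert ((u - v) * (b + b' - 2 * s ^ 2) <= (u - v) * (u + v))
      by (apply Rmult_le_compat_l; lra).
    assert ((u - v) * (u + v) = (b' - b) * (b + b'))
      by (replace ((u - v) * (u + v)) with (u ^ 2 - v ^ 2) by ring; rewrite Eu, Ev; ring).
    lra. }
  assert (H2 : 2 * (j + 1) * s ^ 2 <= b + b').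
  { assert ((j + 1) * s ^ 2 <= s) by
      (replace ((j + 1) * s ^ 2) with (((j + 1) * s) * s) by ring; nra).
    lra. }
  apply (Rmult_le_reg_r (b + b' - 2 * s ^ 2)); [exact HS |].
  assert (j * (u - v) * (b + b' - 2 * s ^ 2) <= j * ((b' - b) * (b + b')))
    by (rewrite Rmult_assoc; apply Rmult_le_compat_l; lra).
  assert (0 <= (b' - b) * (b + b' - 2 * (j + 1) * s ^ 2)) by (apply Rmult_le_pos; lra).
  nra.
Qed.

Lemma qfun_pfun_even k : qfun (2 * INR k) = INR k /\ pfun (2 * INR k) = INR k + 1.
Proof.
  assert (E : 2 * INR k = INR (2 * k)) by (rewrite mult_INR; simpl; lra).
  assert (HI : Int_part (2 * INR k) = (2 * Z.of_nat k)%Z).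
  { rewrite E, Int_part_INR, Nat2Z.inj_mul; reflexivity. }
  assert (Hq : qfun (2 * INR k) = INR k).
  { unfold qfun; rewrite HI, Z.odd_even, mult_IZR, <- INR_IZR_INZ; lra. }
  split; [exact Hq | unfold pfun; rewrite Hq; lra].
Qed.

Definition sk (k : nat) (b : R) : R := sigma_hat (2 * INR k) b.

Definition Mk (k : nat) (b : R) : R := obj (INR k + 1) (INR k) b (sk k b).

Lemma sk_spec k b : 1 <= b -> 0 < sk k b < 1 /\ crit (INR k + 1) (INR k) b (sk k b).
Proof.
  intro Hb. destruct (qfun_pfun_even k) as [Hq Hp]. pose proof (pos_INR k).
  assert (Heq : forall s, sigma_eq (2 * INR k) b s <-> crit (INR k + 1) (INR k) b s).
  { intro s. unfold sigma_eq, crit. rewrite Hp, Hq. reflexivity. }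
  destruct (crit_exists (INR k + 1) (INR k) b ltac:(lra) Hb ltac:(lra)) as [s [Hs Es]].
  destruct (epsilon_spec (inhabits 0)
              (fun s => 0 < s < 1 /\ sigma_eq (2 * INR k) b s)) as [Hs' Es'].
  { exists s. split; [exact Hs | apply Heq, Es]. }
  split; [exact Hs' | apply Heq, Es'].
Qed.

Lemma delta_Mk k b : 1 <= b -> delta k b = Mk (S k) b - Mk k b - 2.
Proof.
  intro Hb.
  assert (Hl : forall j, lfun (2 * INR j) b = Mk j b - 2 * INR j - sqrt 2).
  { intro j. destruct (qfun_pfun_even j) as [Hq Hp]. destruct (sk_spec j b Hb) as [Hs Es].
    unfold lfun, Mk. fold (sk j b). rewrite Hp, Hq, crit_value; auto. }
  unfold delta. replace (2 * INR k + 2) with (2 * INR (S k)) by (rewrite S_INR; ring).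
  rewrite !Hl, S_INR. ring.
Qed.

Lemma obj_le_Mk k b x : 1 <= b -> 0 <= x <= 1 ->
  obj (INR k + 1) (INR k) b x <= Mk k b - (x - sk k b) ^ 2 / (2 * sk k b).
Proof.
  intros Hb Hx. destruct (sk_spec k b Hb) as [Hs Es]. pose proof (pos_INR k).
  apply obj_le_crit; auto; lra.
Qed.

Lemma obj_le_Mk_weak k b x : 1 <= b -> 0 <= x <= 1 -> obj (INR k + 1) (INR k) b x <= Mk k b.
Proof.
  intros Hb Hx. destruct (sk_spec k b Hb) as [Hs Es]. pose proof (pos_INR k).
  apply obj_le_crit_weak; auto; lra.
Qed.

Lemma sk_bound k b : 1 <= b -> (INR k + 1) * sk k b <= 1.
Proof.
  intro Hb. destruct (sk_spec k b Hb) as [Hs Es]. pose proof (pos_INR k).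
  apply (crit_bound _ (INR k) b); auto; lra.
Qed.

Lemma obj_succ k b x : obj (INR (S k) + 1) (INR (S k)) b x =
  obj (INR k + 1) (INR k) b x + sqrt (1 - x ^ 2) + sqrt (b ^ 2 - x ^ 2).
Proof. unfold obj. rewrite S_INR. ring. Qed.

Lemma delta_bounds k b : 1 <= b ->
  sqrt (1 - sk k b ^ 2) + sqrt (b ^ 2 - sk k b ^ 2) - 2 <= delta k b <=
  sqrt (1 - sk (S k) b ^ 2) + sqrt (b ^ 2 - sk (S k) b ^ 2) - 2.
Proof.
  intro Hb. rewrite delta_Mk by exact Hb.
  destruct (sk_spec k b Hb) as [Hs _]. destruct (sk_spec (S k) b Hb) as [Hs' _].
  pose proof (obj_le_Mk_weak (S k) b (sk k b) Hb ltac:(lra)) as A.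
  pose proof (obj_le_Mk_weak k b (sk (S k) b) Hb ltac:(lra)) as A'.
  rewrite obj_succ in A.
  assert (Hk : Mk k b = obj (INR k + 1) (INR k) b (sk k b)) by reflexivity.
  assert (Hk' : Mk (S k) b = obj (INR (S k) + 1) (INR (S k)) b (sk (S k) b))
    by reflexivity.
  rewrite obj_succ in Hk'. split; lra.
Qed.

Lemma Mk_increment k b b' : 1 <= b <= b' ->
  INR k * (b' - b) <= Mk k b' - Mk k b <= (INR k + 1) * (b' - b).
Proof.
  intros Hb. pose proof (pos_INR k).
  destruct (sk_spec k b ltac:(lra)) as [Hs _]. destruct (sk_spec k b' ltac:(lra)) as [Hs' _].
  pose proof (obj_le_Mk_weak k b' (sk k b) ltac:(lra) ltac:(lra)) as A.
  pose proof (obj_le_Mk_weak k b (sk k b') ltac:(lra) ltac:(lra)) as A'.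
  pose proof (sqrt_sq_sub_incr_lower (sk k b) b b' ltac:(nra) Hb) as L.
  pose proof (sqrt_sq_sub_incr_upper (INR k) (sk k b') b b' ltac:(lra) ltac:(lra)
                (sk_bound k b' ltac:(lra)) Hb) as U.
  assert (INR k * (b' - b) <=
          INR k * (sqrt (b' ^ 2 - sk k b ^ 2) - sqrt (b ^ 2 - sk k b ^ 2)))
    by (apply Rmult_le_compat_l; lra).
  unfold Mk, obj in *. split; lra.
Qed.

Lemma delta_increment k b b' : 1 <= b <= b' -> 0 <= delta k b' - delta k b <= 2 * (b' - b).
Proof.
  intros Hb. rewrite !delta_Mk by lra.
  pose proof (Mk_increment k b b' Hb). pose proof (Mk_increment (S k) b b' Hb).
  rewrite S_INR in *. lra.
Qed.

Lemma delta_lipschitz k b b' : 1 <= b -> 1 <= b' ->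
  Rabs (delta k b' - delta k b) <= 2 * Rabs (b' - b).
Proof.
  intros Hb Hb'. destruct (Rle_or_lt b b') as [H | H].
  - pose proof (delta_increment k b b' ltac:(lra)). rewrite !Rabs_right by lra. lra.
  - pose proof (delta_increment k b' b ltac:(lra)).
    rewrite (Rabs_minus_sym (delta k b')), (Rabs_minus_sym b'), !Rabs_right by lra. lra.
Qed.

Lemma crit_succ_excl p q b s : 1 <= b -> 0 < s < 1 -> crit p q b s -> ~ crit (p + 1) (q + 1) b s.
Proof.
  intros Hb Hs E E'. unfold crit in E, E'.
  assert (Hu : 0 < sqrt (1 - s ^ 2)) by (apply sqrt_lt_R0; nra).
  assert (Hv : 0 < sqrt (b ^ 2 - s ^ 2)) by (apply sqrt_lt_R0; nra).
  assert (0 < s / sqrt (1 - s ^ 2)) by (apply Rdiv_lt_0_compat; lra).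
  assert (0 < s / sqrt (b ^ 2 - s ^ 2)) by (apply Rdiv_lt_0_compat; lra).
  assert ((p + 1) * s / sqrt (1 - s ^ 2) + (q + 1) * s / sqrt (b ^ 2 - s ^ 2)
          = p * s / sqrt (1 - s ^ 2) + q * s / sqrt (b ^ 2 - s ^ 2)
            + s / sqrt (1 - s ^ 2) + s / sqrt (b ^ 2 - s ^ 2)) by (field; lra).
  lra.
Qed.

(* Strict convexity of k |-> Mk k b: [obj] is affine in k, and the maximiser of the
   middle term is not a maximiser of the outer one. *)
Lemma delta_lt_succ k b : 1 <= b -> delta k b < delta (S k) b.
Proof.
  intros Hb. rewrite !delta_Mk by lra.
  destruct (sk_spec (S k) b Hb) as [Hs1 E1]. destruct (sk_spec (S (S k)) b Hb) as [Hs2 E2].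
  pose proof (obj_le_Mk (S (S k)) b (sk (S k) b) Hb ltac:(lra)) as A2.
  pose proof (obj_le_Mk_weak k b (sk (S k) b) Hb ltac:(lra)) as A0.
  assert (Hne : sk (S k) b <> sk (S (S k)) b).
  { intro E. rewrite <- E, (S_INR (S k)) in E2. exact (crit_succ_excl _ _ _ _ Hb Hs1 E1 E2). }
  assert (0 < (sk (S k) b - sk (S (S k)) b) ^ 2 / (2 * sk (S (S k)) b)).
  { apply Rdiv_lt_0_compat; [| lra].
    rewrite <- Rsqr_pow2. apply Rsqr_pos_lt. lra. }
  assert (obj (INR (S (S k)) + 1) (INR (S (S k))) b (sk (S k) b)
          + obj (INR k + 1) (INR k) b (sk (S k) b) = 2 * Mk (S k) b)
    by (unfold Mk, obj; rewrite !S_INR; ring).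
  lra.
Qed.

Lemma delta_at_1_neg k : delta k 1 < 0.
Proof.
  destruct (delta_bounds k 1 ltac:(lra)) as [_ H].
  destruct (sk_spec (S k) 1 ltac:(lra)) as [Hs _].
  pose proof (sqrt_lt_1_alt (1 - sk (S k) 1 ^ 2) 1 ltac:(nra)) as Hlt.
  rewrite sqrt_1 in Hlt.
  replace (1 ^ 2) with 1 in H by ring. lra.
Qed.

Lemma delta_lower_bound k b : 1 <= b -> b - 1 - 2 / (INR k + 1) ^ 2 <= delta k b.
Proof.
  intro Hb. destruct (delta_bounds k b Hb) as [H _]. pose proof (sk_bound k b Hb).
  destruct (sk_spec k b Hb) as [Hs _]. set (s := sk k b) in *. clearbody s.
  pose proof (pos_INR k).
  assert (Hs2 : s ^ 2 <= 1 / (INR k + 1) ^ 2).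
  { apply (Rmult_le_reg_r ((INR k + 1) ^ 2)); [nra |].
    unfold Rdiv. rewrite Rmult_1_l, Rinv_l by nra.
    replace (s ^ 2 * (INR k + 1) ^ 2) with (((INR k + 1) * s) ^ 2) by ring.
    assert (0 <= (INR k + 1) * s) by (apply Rmult_le_pos; lra).
    nra. }
  assert (Hs01 : 0 <= s ^ 2 <= 1) by nra.
  assert (1 - s ^ 2 <= sqrt (1 - s ^ 2)) by (apply sqrt_lower; nra).
  pose proof (sqrt_sq_sub_sq_ge b s Hb Hs01).
  unfold Rdiv in *. lra.
Qed.

Lemma sqrt2_bounds : 1.41 < sqrt 2 < 1.415.
Proof.
  split; [apply sqrt_lower_strict | apply Rle_lt_trans with 1.4143; [apply sqrt_upper |]];
    lra.
Qed.

Lemma delta_at_sqrt2_pos k : 0 < delta k (sqrt 2).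
Proof.
  pose proof sqrt2_bounds as Hsqrt2.
  assert (E2 : sqrt 2 ^ 2 = 2) by (apply pow2_sqrt; lra).
  destruct k as [| k].
  - (* M_1(sqrt 2) >= F_1(1/2), while M_0(sqrt 2) <= sqrt 2 by Cauchy-Schwarz. *)
    rewrite delta_Mk by lra.
    pose proof (obj_le_Mk_weak 1 (sqrt 2) (1 / 2) ltac:(lra) ltac:(lra)) as H1.
    unfold obj in H1. rewrite E2 in H1. simpl INR in H1.
    assert (0.86 < sqrt (1 - (1 / 2) ^ 2)) by (apply sqrt_lower_strict; lra).
    assert (1.32 < sqrt (2 - (1 / 2) ^ 2)) by (apply sqrt_lower_strict; lra).
    destruct (sk_spec 0 (sqrt 2) ltac:(lra)) as [Hs _].
    unfold Mk at 2, obj. simpl INR. set (s := sk 0 (sqrt 2)) in *.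
    assert (sqrt (1 - s ^ 2) + s <= sqrt 2).
    { pose proof (sqrt_pos (1 - s ^ 2)). pose proof (pow2_sqrt (1 - s ^ 2) ltac:(nra)).
      apply sqrt_lower; [lra |]. pose proof (pow2_ge_0 (sqrt (1 - s ^ 2) - s)). nra. }
    lra.
  - destruct (delta_bounds (S k) (sqrt 2) ltac:(lra)) as [H _].
    pose proof (sk_bound (S k) (sqrt 2) ltac:(lra)) as Hb.
    destruct (sk_spec (S k) (sqrt 2) ltac:(lra)) as [Hs _].
    rewrite E2 in H. set (s := sk (S k) (sqrt 2)) in *.
    rewrite S_INR in Hb. pose proof (pos_INR k).
    assert (s <= 1 / 2) by nra.
    assert (0.86 <= sqrt (1 - s ^ 2)) by (apply sqrt_lower; nra).
    assert (1.32 <= sqrt (2 - s ^ 2)) by (apply sqrt_lower; nra).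
    lra.
Qed.

Lemma lipschitz_continuity (f : R -> R) (L : R) : 0 <= L ->
  (forall x y, Rabs (f x - f y) <= L * Rabs (x - y)) -> continuity f.
Proof.
  intros HL Hf x eps Heps. exists (eps / (L + 1)). split.
  { apply Rdiv_lt_0_compat; lra. }
  intros y [_ Hy]. simpl in *. unfold R_dist in *.
  apply Rle_lt_trans with (L * Rabs (y - x)); [apply Hf |].
  apply Rle_lt_trans with ((L + 1) * Rabs (y - x)).
  - pose proof (Rabs_pos (y - x)). nra.
  - apply Rmult_lt_reg_r with (/ (L + 1)); [apply Rinv_0_lt_compat; lra |].
    replace ((L + 1) * Rabs (y - x) * / (L + 1)) with (Rabs (y - x)) by (field; lra).
    exact Hy.
Qed.

Lemma Rmax_1_lipschitz x y : Rabs (Rmax 1 x - Rmax 1 y) <= Rabs (x - y).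
Proof. unfold Rmax. repeat destruct Rle_dec; unfold Rabs; repeat destruct Rcase_abs; lra. Qed.

Lemma delta_root_exists k : exists b, 1 < b < sqrt 2 /\ delta k b = 0.
Proof.
  pose proof sqrt2_bounds.
  set (g x := delta k (Rmax 1 x)).
  assert (Hg : continuity g).
  { apply (lipschitz_continuity g 2); [lra |]. intros x y. unfold g.
    eapply Rle_trans;
      [apply delta_lipschitz; apply Rmax_l | pose proof (Rmax_1_lipschitz x y); lra]. }
  assert (Hg1 : g 1 < 0) by (unfold g; rewrite Rmax_left by lra; apply delta_at_1_neg).
  assert (Hg2 : 0 < g (sqrt 2))
    by (unfold g; rewrite Rmax_right by lra; apply delta_at_sqrt2_pos).
  destruct (IVT_interv g 1 (sqrt 2) (fun a _ => Hg a) ltac:(lra) Hg1 Hg2) as [z [Hz Ez]].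
  unfold g in Ez. rewrite Rmax_right in Ez by lra.
  exists z. split; [| exact Ez].
  split; apply Rnot_le_lt; intro Hle.
  - replace z with 1 in Ez by lra. pose proof (delta_at_1_neg k). lra.
  - replace z with (sqrt 2) in Ez by lra. pose proof (delta_at_sqrt2_pos k). lra.
Qed.

Lemma beta_c_spec k : 1 < beta_c k < sqrt 2 /\ delta k (beta_c k) = 0.
Proof. unfold beta_c. apply epsilon_spec, delta_root_exists. Qed.

Lemma beta_c_le k : beta_c k <= 1 + 2 / (INR k + 1) ^ 2.
Proof.
  destruct (beta_c_spec k) as [Hb E].
  pose proof (delta_lower_bound k (beta_c k) ltac:(lra)). lra.
Qed.

Theorem lemma3p13 :
  (forall k : nat, beta_c (S k) < beta_c k) /\ Un_cv beta_c 1.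
Proof.
  split.
  - intro k. destruct (beta_c_spec k) as [Hb E]. destruct (beta_c_spec (S k)) as [Hb' E'].
    apply Rnot_le_lt. intro Hle.
    pose proof (delta_increment (S k) (beta_c k) (beta_c (S k)) ltac:(lra)).
    pose proof (delta_lt_succ k (beta_c k) ltac:(lra)).
    lra.
  - intros eps Heps.
    destruct (INR_archimed eps 2 Heps) as [N HN].
    exists N. intros n Hn. unfold R_dist.
    destruct (beta_c_spec n) as [Hb _]. pose proof (beta_c_le n).
    assert (HnN : INR N <= INR n) by (apply le_INR; lia).
    pose proof (pos_INR N).
    assert (2 / (INR n + 1) ^ 2 < eps).
    { apply (Rmult_lt_reg_r ((INR n + 1) ^ 2)); [nra |].
      unfold Rdiv. rewrite Rmult_assoc, Rinv_l by nra. nra. }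
    rewrite Rabs_right by lra. lra.
Qed.
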